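(* Let $(a_n)_{n\ge1}$ be a sequence of positive integers with $a_1=1$ such that $\alpha_n:=\#\{i:a_i=n\}<\infty$ for all $n$. Let $(X_n)_{n\ge1}$ be independent random variables with $\mathbb{P}(X_n=a_n)=\tfrac12=\mathbb{P}(X_n=0)$. Then, with $L$ ranging over positive integers: (1) if $\limsup_{n\to\infty}\alpha_n^{1/n}=\infty$, then $\liminf_{L\to\infty}\lim_{n\to\infty}\mathbb{P}(X_1=1\mid X_1+\dots+X_n\le L)=0$; (2) if $\limsup_{n\to\infty}\alpha_n^{1/n}<\infty$, then $\limsup_{L\to\infty}\lim_{n\to\infty}\mathbb{P}(X_1=1\mid X_1+\dots+X_n\le L)>0$. *)

From HB Require Import structures.
From mathcomp Require Import all_boot all_order all_algebra.
From mathcomp Require Import all_classical all_reals all_analysis.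
From mathcomp Require Import finmap.
Set Implicit Arguments. Unset Strict Implicit. Unset Printing Implicit Defensive.
Import Order.TTheory GRing.Theory Num.Theory.
Local Open Scope classical_set_scope.
Local Open Scope ring_scope.

Definition mutually_independent d (T : measurableType d) (R : realType)
  (P : probability T R) (X : nat -> T -> R) : Prop :=
  forall (I : {fset nat}) (B : nat -> set R),
    (forall i, i \in I -> measurable (B i)) ->
    P (\bigcap_(i in [set` I]) (X i @^-1` B i)) =
    (\prod_(i <- I) P (X i @^-1` B i))%E.

Definition condprob d (T : measurableType d) (R : realType)
  (P : probability T R) (A B : set T) : R :=
  fine (P (A `&` B)) / fine (P B).

(* alpha_n = #{ i : a_i = n } (meaningful when this set is finite) *)
Definition alpha (a : nat -> nat) (n : nat) : nat :=
  #|` fset_set [set i | a i = n] |%fset.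

From HB Require Import structures.
From mathcomp Require Import all_boot all_order all_algebra.
From mathcomp Require Import all_classical all_reals all_analysis.
From mathcomp Require Import finmap ring lra.
Set Implicit Arguments. Unset Strict Implicit. Unset Printing Implicit Defensive.
Import Order.TTheory GRing.Theory Num.Theory.
Import numFieldNormedType.Exports.
Local Open Scope classical_set_scope.
Local Open Scope ring_scope.

(* The vector (X_1, ..., X_n) is uniform
   on the 2^n atoms {X_i = s_i a_i}, s in {0,1}^n, so P(X_1 + ... + X_n <= L)
   is 2^-n times the number of sets I of indices with Σ_{i ∈ I} a_i <= L.
   As a_1 = 1, splitting on X_1 gives
     P(X_1 = 1 | X_1 + ... + X_(n+1) <= L + 1) = N_n(L) / (N_n(L + 1) + N_n(L)),
   where N_n(m) counts the sets I ⊆ {2, ..., n + 1} with Σ_{i ∈ I} a_i <= m.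
   Finite fibres force
   a_i -> oo, so N_n(m) is eventually a constant F(m): the limit in n is
   F(L) / (F(L + 1) + F(L)).  Singletons give α_m <= F(m) for m >= 2, while
   Rankin's trick gives F(m) <= y^m Π_i (1 + y^-a_i) <= y^m exp(Σ_k α_k y^-k).
   (1) If the ratio stayed above e > 0, F, hence α, would grow at most
   geometrically, so α_n^(1/n) would stay bounded.
   (2) If α_k <= C B^k, then F(m) <= D (2B)^m, which forbids the ratio to stay
   below 1/(1 + 4B): that would force F(m + 1) > 4B F(m) from some m on. *)

(** * Counting subsets of small weight *)

(* [nsubsets_le a n m] is the number of sets I ⊆ [0, n) such that
   Σ_{i ∈ I} a i <= m, counted according to whether 0 ∈ I. *)
Fixpoint nsubsets_le (a : nat -> nat) (n m : nat) : nat :=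
  if n is n'.+1 then
    nsubsets_le (fun i => a i.+1) n' m +
    (if (a 0 <= m)%N then nsubsets_le (fun i => a i.+1) n' (m - a 0) else 0)
  else 1.

Lemma nsubsets_le_gt0 a n m : (0 < nsubsets_le a n m)%N.
Proof. by elim: n a m => [|n IHn] a m //=; rewrite ltn_addr. Qed.

Lemma nsubsets_le_large a n m :
  (forall i, (m < a i)%N) -> nsubsets_le a n m = 1%N.
Proof. by elim: n a => [//|n IHn] a am /=; rewrite IHn // leqNgt am addn0. Qed.

Lemma nsubsets_le_stable a N n m :
  (forall i, (N <= i)%N -> (m < a i)%N) -> (N <= n)%N ->
  nsubsets_le a n m = nsubsets_le a N m.
Proof.
elim: N a n m => [|N IHN] a n m am Nn.
  by rewrite nsubsets_le_large // => i; apply: am.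
case: n Nn => [//|n] /= Nn.
have am' i : (N <= i)%N -> (m < a i.+1)%N by move=> Ni; apply: am.
rewrite (IHN _ _ _ am') //; case: ifP => // _.
by rewrite IHN // => i /am'; apply: leq_ltn_trans (leq_subr _ _).
Qed.

Lemma count_eq_le_nsubsets_le a n m :
  (count (fun j => a j == m) (iota 0 n) <= nsubsets_le a n m)%N.
Proof.
elim: n a => [//|n IHn] a /=.
rewrite -[1%N]addn0 iotaDl count_map addnC leq_add ?IHn //.
by case: eqP => [->|//]; rewrite leqnn nsubsets_le_gt0.
Qed.

(* Rankin's trick: the indicator of [Σ_{i ∈ I} a i <= m] is at most
   [y ^ (m - Σ_{i ∈ I} a i)] when [1 <= y]. *)
Lemma nsubsets_le_Rankin (R : realFieldType) (y : R) a n m : 1 <= y ->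
  (nsubsets_le a n m)%:R <= y ^+ m * \prod_(j < n) (1 + y^-1 ^+ a j).
Proof.
move=> y1; have y0 : 0 < y by rewrite (lt_le_trans ltr01).
elim: n a m => [|n IHn] a m; first by rewrite big_ord0 mulr1 exprn_ege1.
rewrite big_ord_recl /= natrD mulrDl mul1r mulrDr lerD ?IHn //.
have prod_gt0 : 0 < \prod_(j < n) (1 + y^-1 ^+ a (bump 0 j)).
  by rewrite prodr_gt0 // => j _; rewrite ltr_wpDr // exprn_ge0 // invr_ge0 ltW.
case: ifP => am.
  apply: le_trans (IHn _ _) _; rewrite mulrA ler_pM2r //.
  by rewrite -{2}(subnK am) exprD exprVn mulrK // unitfE expf_neq0 // gt_eqF.
by rewrite mulr_ge0 ?exprn_ge0 ?ltW // mulr_gt0 ?exprn_gt0 ?invr_gt0.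
Qed.

Lemma sum_expr_count (R : ringType) (w : R) a n K :
  (forall j, (j < n)%N -> (a j < K)%N) ->
  \sum_(j < n) w ^+ a j =
  \sum_(k < K) (count (fun j => a j == k) (iota 0 n))%:R * w ^+ k.
Proof.
elim: n => [|n IHn] aK; first by rewrite big_ord0 big1 // => k _; rewrite mul0r.
rewrite big_ord_recr IHn => [|j jn]; last by apply: aK; apply: ltnW.
have -> : iota 0 n.+1 = iota 0 n ++ [:: n] by rewrite -addn1 iotaD.
under [in RHS]eq_bigr do rewrite count_cat /= addn0 natrD mulrDl.
rewrite big_split /=; congr (_ + _).
rewrite (bigD1 (Ordinal (aK n (ltnSn n)))) //= eqxx mul1r big1 ?addr0 // => k.
by rewrite -val_eqE /= eq_sym => /negbTE ->; rewrite mul0r.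
Qed.

Lemma nsubsets_le_geometric (R : realType) (C B : R) a :
  0 <= C -> 1 <= B ->
  (forall n k, (count (fun j => a j == k) (iota 0 n))%:R <= C * B ^+ k) ->
  forall n m, (nsubsets_le a n m)%:R <= expR (2 * C) * (2 * B) ^+ m.
Proof.
move=> C0 B1 countB n m.
have B2 : 1 <= 2 * B by lra.
have w0 : 0 <= (2 * B)^-1 by rewrite invr_ge0; lra.
apply: le_trans (nsubsets_le_Rankin a n m B2) _.
rewrite mulrC ler_wpM2r ?exprn_ge0 ?(le_trans ler01) //.
apply: (le_trans (y := expR (\sum_(j < n) (2 * B)^-1 ^+ a j))).
  rewrite expR_sum; apply: ler_prod => j _.
  by rewrite addr_ge0 ?exprn_ge0 ?expR_ge1Dx.
set K := (\max_(j < n) a j).+1.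
rewrite ler_expR (@sum_expr_count _ _ _ _ K) => [|j jn]; last first.
  by rewrite ltnS (@leq_bigmax _ (fun j : 'I_n => a j) (Ordinal jn)).
apply: (le_trans (y := \sum_(k < K) C * (2^-1) ^+ k)).
  apply: ler_sum => k _.
  apply: le_trans (ler_wpM2r (exprn_ge0 _ w0) (countB n k)) _.
  by rewrite -mulrA -exprMn invfM mulrCA mulfV ?mulr1 // gt_eqF //; lra.
rewrite -(big_mkord xpredT (fun k => C * 2^-1 ^+ k)).
apply: le_trans (geometric_le_lim _ C0 _ _) _; rewrite ?ger0_norm; try lra.
have -> : 1 - 2^-1 = 2^-1 :> R by field.
by rewrite invrK mulrC.
Qed.

(** * Atoms of a sequence of two-valued random variables *)

Fixpoint bitseqs (n : nat) : seq (seq bool) :=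
  if n is n'.+1 then map (cons false) (bitseqs n') ++ map (cons true) (bitseqs n')
  else [:: [::]].

Lemma size_bitseqs n : size (bitseqs n) = (2 ^ n)%N.
Proof.
by elim: n => [//|n IHn] /=; rewrite size_cat !size_map IHn expnS mul2n addnn.
Qed.

Lemma size_mem_bitseqs n s : s \in bitseqs n -> size s = n.
Proof.
elim: n s => [|n IHn] s /=; first by rewrite inE => /eqP ->.
by rewrite mem_cat => /orP[] /mapP[s' /IHn <- ->].
Qed.

Lemma uniq_bitseqs n : uniq (bitseqs n).
Proof.
elim: n => [//|n IHn] /=.
have cons_inj (b : bool) : injective (cons b) by move=> s s' [].
rewrite cat_uniq !map_inj_uniq // IHn andbT /=.
by apply/hasPn => _ /mapP[s _ ->]; apply/mapP => -[].
Qed.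

Definition wsum (a : nat -> nat) (s : seq bool) : nat :=
  \sum_(i < size s) nth false s i * a i.

Lemma wsum_cons a b s : wsum a (b :: s) = (b * a 0 + wsum (fun i => a i.+1) s)%N.
Proof. by rewrite /wsum /= big_ord_recl. Qed.

Lemma count_cons_false_wsum_le a m l :
  count (fun s => wsum a s <= m)%N (map (cons false) l) =
  count (fun s => wsum (fun i => a i.+1) s <= m)%N l.
Proof. by rewrite count_map; apply: eq_count => s /=; rewrite wsum_cons. Qed.

Lemma count_cons_true_wsum_le a m l :
  count (fun s => wsum a s <= m)%N (map (cons true) l) =
  if (a 0 <= m)%N then count (fun s => wsum (fun i => a i.+1) s <= m - a 0)%N l
  else 0%N.
Proof.
rewrite count_map; case: ifP => am.
  by apply: eq_count => s /=; rewrite wsum_cons mul1n leq_subRL.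
apply/eqP; rewrite -leqn0 leqNgt -has_count; apply/hasPn => s _ /=.
by rewrite wsum_cons mul1n -ltnNge (leq_trans _ (leq_addr _ _)) // ltnNge am.
Qed.

Lemma count_wsum_le a n m :
  count (fun s => wsum a s <= m)%N (bitseqs n) = nsubsets_le a n m.
Proof.
elim: n a m => [|n IHn] a m /=; first by rewrite /wsum big_ord0.
by rewrite count_cat count_cons_false_wsum_le count_cons_true_wsum_le !IHn.
Qed.

Lemma count_head_wsum_le a n m :
  count (fun s => head false s && (wsum a s <= m))%N (bitseqs n.+1) =
  if (a 0 <= m)%N then nsubsets_le (fun i => a i.+1) n (m - a 0) else 0%N.
Proof.
rewrite -count_wsum_le -count_cons_true_wsum_le /= count_cat !count_map.
by rewrite (@eq_count _ _ pred0) ?count_pred0.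
Qed.

Lemma probability_setI_full d (T : measurableType d) (R : realType)
    (P : probability T R) (A U : set T) :
  measurable A -> measurable U -> P U = 1%E -> P (A `&` U) = P A.
Proof.
move=> mA mU PU; rewrite [RHS](measureDI P mA mU).
have PnU : P (~` U) = 0%E by rewrite probability_setC // PU subee.
rewrite (@subset_measure0 _ _ _ P (A `\` U) (~` U)) ?add0e //.
  exact: measurableD.
exact: measurableC.
Qed.

Definition ratioS (R : realType) (F : nat -> nat) (k : nat) : R :=
  (F k)%:R / ((F k.+1)%:R + (F k)%:R).

Section BernoulliAtoms.
Context d (T : measurableType d) (R : realType) (P : probability T R).
Variables (X : nat -> {RV P >-> R}) (a : nat -> nat).
Hypotheses (a_gt0 : forall i, (0 < a i)%N)
  (X_indep : mutually_independent P (fun i => X i : T -> R))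
  (X_a : forall i, P [set t | X i t = (a i)%:R] = (2^-1)%:E)
  (X_0 : forall i, P [set t | X i t = 0] = (2^-1)%:E).

Definition atom (s : seq bool) : set T :=
  [set t | forall i, (i < size s)%N -> X i t = (nth false s i * a i)%:R].

Lemma atomE s : atom s = \bigcap_(i in [set` seq_fset tt (iota 0 (size s))])
  X i @^-1` [set (nth false s i * a i)%:R].
Proof.
have memI i : [set` seq_fset tt (iota 0 (size s))] i <-> (i < size s)%N.
  by change (i \in seq_fset tt (iota 0 (size s)) <-> (i < size s)%N);
    rewrite seq_fsetE mem_iota.
by apply/seteqP; split=> t At i /memI; apply: At.
Qed.

Lemma measurable_atom s : measurable (atom s).
Proof.
rewrite atomE; apply: fin_bigcap_measurable; first exact: finite_fset.
by move=> i _; exact: measurable_funPTI (measurable_set1 _).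
Qed.

Lemma prob_atom s : P (atom s) = ((2^-1) ^+ size s)%:E.
Proof.
rewrite atomE X_indep => [|i _]; last exact: measurable_set1.
rewrite (eq_bigr (fun=> (2^-1)%:E)) => [|i _]; last first.
  by case: nth; [rewrite mul1n; exact: X_a | exact: X_0].
rewrite prodEFin big_const_seq count_predT iter_mulr_1.
by rewrite size_seq_fset undup_id ?iota_uniq // size_iota.
Qed.

Lemma atomI_eq0 s s' : size s = size s' -> s != s' -> atom s `&` atom s' = set0.
Proof.
move=> ss' /eqP s_neq; apply/seteqP; split => // t [At A't]; apply: s_neq.
apply: (eq_from_nth (x0 := false) ss') => i si.
have si' : (i < size s')%N by rewrite -ss'.
have /eqP := etrans (esym (At i si)) (A't i si').
by rewrite eqr_nat eqn_pmul2r //; do 2 case: nth.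
Qed.

Lemma prob_bigsetU_atom n l (Q : pred (seq bool)) :
  uniq l -> {in l, forall s, size s = n} ->
  P (\big[setU/set0]_(s <- l | Q s) atom s) = ((count Q l)%:R * (2^-1) ^+ n)%:E.
Proof.
move=> l_uniq l_size; rewrite -big_filter -bigcup_seq measure_fin_bigcup.
- rewrite -fsbig_seq ?filter_uniq // (eq_big_seq (fun=> ((2^-1) ^+ n)%:E)).
    by rewrite sumEFin big_const_seq count_predT iter_addr_0 size_filter mulr_natl.
  by move=> s; rewrite mem_filter => /andP[_ /l_size <-]; exact: prob_atom.
- exact: finite_seq.
- move=> s s' /=; rewrite !mem_filter => /andP[_ /l_size ls] /andP[_ /l_size ls'].
  have [//|s_neq] := eqVneq s s'.
  by rewrite atomI_eq0 ?ls ?ls' // => -[].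
- by move=> s _; exact: measurable_atom.
Qed.

Lemma prob_atom_count n (A : set T) (Q : pred (seq bool)) : measurable A ->
  (forall s t, s \in bitseqs n -> atom s t -> A t <-> Q s) ->
  P A = ((count Q (bitseqs n))%:R * (2^-1) ^+ n)%:E.
Proof.
move=> mA AQ; set U := \big[setU/set0]_(s <- bitseqs n) atom s.
have mU : measurable U by apply: bigsetU_measurable => s _; exact: measurable_atom.
have PU : P U = 1%E.
  rewrite (@prob_bigsetU_atom n) ?uniq_bitseqs //; last exact: size_mem_bitseqs.
  by rewrite count_predT size_bitseqs natrX exprVn mulfV // expf_neq0.
have AU : A `&` U = \big[setU/set0]_(s <- bitseqs n | Q s) atom s.
  rewrite /U -bigcup_seq -bigcup_seq_cond; apply/seteqP; split => t.
    by move=> [At [s sn Est]]; exists s => //=; rewrite sn; apply/(AQ s t sn Est).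
  by move=> [s /andP[sn Qs] Est]; split; [exact/(AQ s t sn Est) | exists s].
rewrite -(probability_setI_full mA mU PU) AU (@prob_bigsetU_atom n) //.
  exact: uniq_bitseqs.
exact: size_mem_bitseqs.
Qed.

Lemma sum_X_atom n s t : size s = n -> atom s t ->
  \sum_(i < n) X i t = (wsum a s)%:R.
Proof.
by move=> <- Ast; rewrite /wsum natr_sum; apply: eq_bigr => i _; exact: Ast.
Qed.

Lemma measurable_sum_X_le n (r : R) :
  measurable [set t | \sum_(i < n) X i t <= r].
Proof.
rewrite -[X in measurable X]setTI; apply: measurable_fun_le => //.
by apply: measurable_sum => i; exact: measurable_funP.
Qed.

Lemma prob_sum_X_le n (L : nat) :
  P [set t | \sum_(i < n) X i t <= L%:R] =
  ((nsubsets_le a n L)%:R * (2^-1) ^+ n)%:E.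
Proof.
rewrite -count_wsum_le; apply: prob_atom_count => [|s t /size_mem_bitseqs sn Ast].
  exact: measurable_sum_X_le.
by rewrite /= (sum_X_atom sn Ast) ler_nat.
Qed.

Lemma prob_X0_sum_X_le (a0 : a 0 = 1%N) n L :
  P ([set t | X 0 t = 1] `&` [set t | \sum_(i < n.+1) X i t <= L.+1%:R]) =
  ((nsubsets_le (fun i => a i.+1) n L)%:R * (2^-1) ^+ n.+1)%:E.
Proof.
have -> : nsubsets_le (fun i => a i.+1) n L =
          count (fun s => head false s && (wsum a s <= L.+1)%N) (bitseqs n.+1).
  by rewrite count_head_wsum_le a0 subn1.
apply: prob_atom_count => [|s t /size_mem_bitseqs sn Ast].
  apply: measurableI; last exact: measurable_sum_X_le.
  exact: measurable_funPTI (measurable_set1 _).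
have X0t : X 0 t = (head false s)%:R.
  by case: s sn Ast => // b s' _ /(_ 0%N isT); rewrite a0 muln1.
rewrite /= X0t (sum_X_atom sn Ast) ler_nat.
by case: (head false s) => /=; split=> [[/esym/eqP]|]; rewrite ?oner_eq0.
Qed.

Lemma condprob_X0_sum_X_le (a0 : a 0 = 1%N) n L :
  condprob P [set t | X 0 t = 1] [set t | \sum_(i < n.+1) X i t <= L.+1%:R] =
  ratioS R (nsubsets_le (fun i => a i.+1) n) L.
Proof.
rewrite /condprob prob_X0_sum_X_le // prob_sum_X_le /= a0 subn1 /= natrD /ratioS.
by rewrite invfM mulrACA mulfV ?mulr1 // expf_neq0 // invr_eq0 pnatr_eq0.
Qed.

End BernoulliAtoms.

(** * Limit superior and inferior of extended real sequences *)

Section limn_esup_einf_frequently.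
Context {R : realType}.
Implicit Types (u : (\bar R)^nat) (x : \bar R).
Local Open Scope ereal_scope.

Lemma limn_esup_le_near u x : (\forall n \near \oo, u n <= x) -> limn_esup u <= x.
Proof.
move=> ux; rewrite /limn_esup limf_esupE; apply: ge_ereal_inf.
exists (ereal_sup (u @` [set n | u n <= x])); first by exists [set n | u n <= x].
by apply: ge_ereal_sup => _ [n + <-].
Qed.

Lemma limn_esup_lt_near u x : limn_esup u < x -> \forall n \near \oo, u n < x.
Proof.
rewrite /limn_esup limf_esupE => /ereal_inf_lt[_ [V Voo <-] Vx].
apply: filterS Voo => n Vn; apply: le_lt_trans Vx.
by apply: ereal_sup_ubound; exists n.
Qed.

Lemma limn_esup_ge_frequently u x :
  (forall N, exists2 n, (N <= n)%N & x <= u n) -> x <= limn_esup u.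
Proof.
move=> ux; rewrite /limn_esup limf_esupE.
apply: le_ereal_inf_tmp => _ [V [N _ NV] <-]; have [n Nn xun] := ux N.
by apply: le_ereal_sup_tmp; exists (u n) => //; exists n => //; apply: NV.
Qed.

Lemma limn_einf_eq0 u : (forall n, 0 <= u n) ->
  (forall e : R, (0 < e)%R -> forall N, exists2 n, (N <= n)%N & u n <= e%:E) ->
  limn_einf u = 0.
Proof.
move=> u0 ue; change (limf_einf u \oo = 0); rewrite limf_einfE.
apply/eqP; rewrite eq_le; apply/andP; split.
  apply: ge_ereal_sup => _ [V [N _ NV] <-]; apply/lee_addgt0Pr => e e0.
  have [n Nn une] := ue e e0 N; rewrite add0e; apply: ge_ereal_inf.
  by exists (u n) => //; exists n => //; apply: NV.
apply: le_ereal_sup_tmp; exists (ereal_inf (u @` setT)).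
  by exists setT => //; exact: filterT.
by apply: le_ereal_inf_tmp => _ [n _ <-].
Qed.

End limn_esup_einf_frequently.

(** * Growth of the limiting conditional probabilities *)

Section ratioS_growth.
Variable R : realType.
Implicit Types (F : nat -> nat) (e : R).

Lemma ratioS_ge0 F k : 0 <= ratioS R F k.
Proof. by rewrite /ratioS divr_ge0 ?addr_ge0. Qed.

Lemma ratioS_ge F e k : (0 < F k)%N -> 0 < e ->
  (e <= ratioS R F k) = ((F k.+1)%:R <= (e^-1 - 1) * (F k)%:R).
Proof.
move=> Fk e0; rewrite /ratioS ler_pdivlMr ?ltr_wpDl ?ltr0n //.
by rewrite mulrBl mul1r lerBrDr -ler_pdivlMl ?invr_gt0 // invrK mulrC.
Qed.

Lemma ratioS_ge_geometric F e N : (forall m, (0 < F m)%N) -> 0 < e ->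
  (forall k, (N <= k)%N -> e <= ratioS R F k) ->
  forall k, (N <= k)%N -> (F k)%:R <= (F N)%:R * Num.max (e^-1 - 1) 1 ^+ k.
Proof.
move=> F_gt0 e0 Fe k Nk; set K := Num.max _ _.
have K1 : 1 <= K by rewrite le_max lexx orbT.
have step j : (F (N + j)%N.+1)%:R <= K * (F (N + j)%N)%:R.
  apply: le_trans (_ : (e^-1 - 1) * (F (N + j)%N)%:R <= _).
    by rewrite -ratioS_ge //; apply: Fe; rewrite leq_addr.
  by rewrite ler_wpM2r // le_max lexx.
have grow j : (F (N + j)%N)%:R <= (F N)%:R * K ^+ j.
  elim: j => [|j IHj]; first by rewrite addn0 expr0 mulr1.
  by rewrite addnS exprS mulrCA (le_trans (step j)) // ler_wpM2l ?(le_trans ler01).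
rewrite -(subnKC Nk); apply: le_trans (grow _) _.
by rewrite ler_wpM2l // ler_weXn2l // leq_addl.
Qed.

Lemma ratioS_frequently_ge F (D y : R) : (forall m, (0 < F m)%N) -> 0 < y ->
  (forall m, (F m)%:R <= D * y ^+ m) ->
  forall N, exists2 k, (N <= k)%N & (1 + 2 * y)^-1 <= ratioS R F k.
Proof.
move=> F_gt0 y0 FD N; apply: contrapT => /forall2NP small.
have e0 : 0 < (1 + 2 * y)^-1 by rewrite invr_gt0; lra.
have step j : 2 * y * (F (N + j)%N)%:R <= (F (N + j)%N.+1)%:R.
  have [/negP|] := small (N + j)%N; first by rewrite leq_addr.
  by move/negP; rewrite ratioS_ge // invrK (addrC 1) addrK -ltNge => /ltW.
have grow j : (2 * y) ^+ j <= (F (N + j)%N)%:R.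
  elim: j => [|j IHj]; first by rewrite addn0 ler1n.
  by rewrite addnS exprS (le_trans _ (step j)) // ler_wpM2l //; lra.
set C := D * y ^+ N; have C0 : 0 <= C by apply: le_trans (FD N); rewrite ler0n.
have /(_ (Num.bound C)) : forall j, (2 ^ j)%:R <= C.
  move=> j; have := le_trans (grow j) (FD (N + j)%N).
  by rewrite exprD mulrA exprMn ler_pM2r ?exprn_gt0 // natrX.
apply/negP; rewrite -ltNge (lt_le_trans (archi_boundP C0)) //.
by rewrite ler_nat ltnW // ltn_expl.
Qed.

End ratioS_growth.

Lemma powR_invn_le (R : realType) (x y : R) n :
  (0 < n)%N -> 0 <= x -> 0 <= y -> (x `^ (n%:R)^-1 <= y) = (x <= y ^+ n).
Proof.
move=> n0 x0 y0; have xE : x = (x `^ (n%:R)^-1) ^+ n.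
  by rewrite -powR_mulrn ?powR_ge0 // -powRrM mulVf ?powRr1 // pnatr_eq0 -lt0n.
by rewrite {2}xE ler_pXn2r // nnegrE powR_ge0.
Qed.

Section root_growth.
Variable R : realType.
Local Open Scope ereal_scope.

Lemma limn_esup_root_lty (u : nat -> nat) (C K : R) :
  (1 <= C)%R -> (0 <= K)%R -> (\forall k \near \oo, ((u k)%:R <= C * K ^+ k)%R) ->
  limn_esup (fun k => ((u k.+1)%:R `^ (k.+1%:R)^-1 : R)%:E) < +oo.
Proof.
move=> C1 K0 [N _ uCK]; apply: le_lt_trans (ltry (C * K)).
apply: limn_esup_le_near; exists N => // k /= Nk.
have C0 : (0 <= C)%R by apply: le_trans C1.
rewrite lee_fin powR_invn_le ?mulr_ge0 //; apply: le_trans (uCK _ (leqW Nk)) _.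
by rewrite exprMn ler_wpM2r ?exprn_ge0 // exprS ler_peMr ?exprn_ege1.
Qed.

Lemma geometric_of_limn_esup_root_lty (u : nat -> nat) :
  limn_esup (fun k => ((u k.+1)%:R `^ (k.+1%:R)^-1 : R)%:E) < +oo ->
  exists C B : R,
    [/\ (0 <= C)%R, (1 <= B)%R & forall k, ((u k)%:R <= C * B ^+ k)%R].
Proof.
move=> u_lty; have [x sx] : exists x : R, limn_esup
    (fun k => ((u k.+1)%:R `^ (k.+1%:R)^-1 : R)%:E) < x%:E.
  move: u_lty; case: limn_esup => [r _|//|_];
    [by exists (r + 1)%R; rewrite lte_fin ltrDl | by exists 0%R; rewrite ltNyr].
have [N _ uN] := limn_esup_lt_near sx; set B := Num.max x 1%R.
have B1 : (1 <= B)%R by rewrite le_max lexx orbT.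
exists ((\max_(k < N.+1) u k)%:R + 1)%R, B; split => // k.
have [kN|Nk] := leqP k N.
  apply: le_trans (_ : _ <= (\max_(k < N.+1) u k)%:R + 1)%R _.
    rewrite ler_wpDr // ler_nat.
    exact: (@leq_bigmax _ (fun k : 'I_N.+1 => u k) (Ordinal (kN : (k < N.+1)%N))).
  by rewrite ler_peMr ?addr_ge0 ?exprn_ege1.
case: k Nk => [//|k] Nk; apply: le_trans (_ : _ <= B ^+ k.+1)%R _.
  rewrite -powR_invn_le //; last exact: le_trans ler01 B1.
  by have := uN k Nk; rewrite lte_fin => /ltW /le_trans; apply; rewrite le_max lexx.
by rewrite ler_peMl ?exprn_ge0 ?(le_trans ler01) // lerDr.
Qed.

End root_growth.

Lemma ratioS_frequently_le (R : realType) (F u : nat -> nat) (e : R) N :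
  (forall m, (0 < F m)%N) -> (\forall m \near \oo, (u m <= F m)%N) ->
  limn_esup (fun k => ((u k.+1)%:R `^ (k.+1%:R)^-1 : R)%:E) = +oo%E -> 0 < e ->
  exists2 n, (N <= n)%N & ratioS R F n <= e.
Proof.
move=> F_gt0 uF u_oo e0; apply: contrapT => /forall2NP large.
have Fe k : (N <= k)%N -> e <= ratioS R F k.
  move=> Nk; have [/negP|/negP] := large k; first by rewrite Nk.
  by rewrite -ltNge => /ltW.
have : (limn_esup (fun k => ((u k.+1)%:R `^ (k.+1%:R)^-1 : R)%:E) < +oo)%E.
  apply: (@limn_esup_root_lty _ _ (F N)%:R (Num.max (e^-1 - 1) 1)).
  - by rewrite ler1n.
  - by rewrite le_max ler01 orbT.
  apply: filterS2 uF (nbhs_infty_ge N) => k ukF Nk.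
  by apply: le_trans (ratioS_ge_geometric F_gt0 e0 Fe Nk); rewrite ler_nat.
by rewrite u_oo.
Qed.

Lemma finite_eventually_notin (A : set nat) :
  finite_set A -> \forall i \near \oo, ~ A i.
Proof.
move=> Afin; exists (\max_(j <- fset_set A) j).+1 => // i /= + Ai.
by rewrite ltnNge (@leq_bigmax_seq _ _ predT id) // in_fset_set // mem_set.
Qed.

Lemma finite_fibers_gt (a : nat -> nat) :
  (forall n, finite_set [set i | a i = n]) ->
  forall m, \forall i \near \oo, (m < a i)%N.
Proof.
move=> afin m; have neq k := finite_eventually_notin (afin k).
elim: m => [|m IHm]; first by apply: filterS (neq 0%N) => i /eqP; rewrite lt0n.
apply: filterS2 IHm (neq m.+1) => i mi /eqP ne.
by rewrite ltn_neqAle mi andbT eq_sym.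
Qed.

Lemma nsubsets_le_eventually_const a m : (\forall i \near \oo, (m < a i)%N) ->
  exists F, \forall n \near \oo, nsubsets_le a n m = F.
Proof.
move=> [N _ aN]; exists (nsubsets_le a N m), N => // n /= Nn.
exact: nsubsets_le_stable.
Qed.

Lemma count_shift_le_alpha a m n : finite_set [set i | a i = m] ->
  (count (fun j => a j.+1 == m) (iota 0 n) <= alpha a m)%N.
Proof.
move=> fin; rewrite -size_filter /alpha -(size_map succn).
apply: uniq_leq_size => [|_ /mapP[j + ->]].
  by rewrite (map_inj_uniq succn_inj) filter_uniq ?iota_uniq.
by rewrite mem_filter => /andP[/eqP aj _]; rewrite in_fset_set // mem_set.
Qed.

Lemma alpha_le_count_shift a m : a 0 != m -> finite_set [set i | a i = m] ->
  \forall n \near \oo, (alpha a m <= count (fun j => a j.+1 == m) (iota 0 n))%N.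
Proof.
move=> a0m fin; have [N _ AN] := finite_eventually_notin fin.
exists N => // n /= Nn; rewrite -size_filter /alpha -(size_map succn).
apply: uniq_leq_size => [|[|i]]; first exact: fset_uniq.
  by rewrite in_fset_set // in_setE /= => a0; rewrite a0 eqxx in a0m.
rewrite in_fset_set // in_setE /= => ai; apply/mapP; exists i => //.
have iN : (i.+1 < N)%N by rewrite ltnNge; apply/negP => /AN.
by rewrite mem_filter ai eqxx mem_iota /= (leq_trans (ltnW iN)).
Qed.

Lemma alpha_le_nsubsets_le_limit a (F : nat -> nat) : a 0 = 1%N ->
  (forall n, finite_set [set i | a i = n]) ->
  (forall m, \forall n \near \oo, nsubsets_le (fun i => a i.+1) n m = F m) ->
  \forall m \near \oo, (alpha a m <= F m)%N.
Proof.
move=> a0 afin aF; exists 2%N => // m /= m2.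
have a0m : a 0 != m by rewrite a0; case: m m2 => [|[|]].
have [N1 _ alpha_le] := alpha_le_count_shift a0m (afin m).
have [N2 _ aFm] := aF m; rewrite -(aFm (maxn N1 N2) (leq_maxr _ _)).
exact: leq_trans (alpha_le _ (leq_maxl _ _)) (count_eq_le_nsubsets_le _ _ _).
Qed.

(* Indexing is 0-based: a 0, X 0 play the role of a_1, X_1, and
   X_1 + ... + X_n is \sum_(i < n) X i. *)
Theorem theoremA3 (d : measure_display) (T : measurableType d) (R : realType)
  (P : probability T R) (a : nat -> nat) (X : nat -> {RV P >-> R})
  (apos : forall i, (0 < a i)%N)
  (a0 : a 0%N = 1%N)
  (afin : forall n, finite_set [set i | a i = n])
  (Xind : mutually_independent P (fun i => X i : T -> R))
  (Xa : forall i, P [set t | X i t = (a i)%:R] = (2^-1)%:E)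
  (X0 : forall i, P [set t | X i t = 0] = (2^-1)%:E) :
  let c := fun (L n : nat) =>
    condprob P [set t | X 0%N t = 1]
               [set t | \sum_(i < n) X i t <= L%:R] in
  let beta := fun k : nat =>
    ((alpha a k.+1)%:R `^ (k.+1%:R)^-1 : R)%:E in
  (forall L : nat, cvgn (c L.+1)) /\
  (limn_esup beta = +oo%E ->
     limn_einf (fun L : nat => (limn (c L.+1))%:E) = 0%E) /\
  ((limn_esup beta < +oo)%E ->
     (0 < limn_esup (fun L : nat => (limn (c L.+1))%:E))%E).
Proof.
move=> c beta; set a' := fun i => a i.+1.
have a'_gt m : \forall i \near \oo, (m < a' i)%N.
  have [N _ aN] := finite_fibers_gt afin m.
  by exists N => // i /= Ni; apply/aN/leqW.
have [F aF] := choice (fun m => nsubsets_le_eventually_const (a'_gt m)).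
have F_gt0 m : (0 < F m)%N.
  by have [N _ aFN] := aF m; rewrite -(aFN N (leqnn N)) nsubsets_le_gt0.
have cF L : c L.+1 @ \oo --> ratioS R F L.
  apply: cvg_near_cst; apply: near_inftyS.
  apply: filterS2 (aF L) (aF L.+1) => n FL FL1.
  by rewrite /c (condprob_X0_sum_X_le apos Xind Xa X0 a0) /ratioS FL FL1.
have -> : (fun L => (limn (c L.+1))%:E) = (fun L => (ratioS R F L)%:E).
  by apply/funext => L; rewrite (cvg_lim _ (cF L)).
split; first by move=> L; apply/cvg_ex; exists (ratioS R F L).
split=> [beta_oo | beta_lty].
  apply: limn_einf_eq0 => [L|e e0 N]; first by rewrite lee_fin ratioS_ge0.
  have [n Nn small] := ratioS_frequently_le N F_gt0
    (alpha_le_nsubsets_le_limit a0 afin aF) beta_oo e0.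
  by exists n; rewrite ?lee_fin.
have [C [B [C0 B1 alphaB]]] := geometric_of_limn_esup_root_lty beta_lty.
have FB m : (F m)%:R <= expR (2 * C) * (2 * B) ^+ m.
  have [N _ aFN] := aF m; rewrite -(aFN N (leqnn N)).
  apply: nsubsets_le_geometric => // n k; apply: le_trans (alphaB k).
  by rewrite ler_nat count_shift_le_alpha.
have B0 : 0 < 2 * B by lra.
apply: (@lt_le_trans _ _ ((1 + 2 * (2 * B))^-1)%:E).
  by rewrite lte_fin invr_gt0; lra.
apply: limn_esup_ge_frequently => N.
by have [k Nk ge] := ratioS_frequently_ge F_gt0 B0 FB N; exists k; rewrite ?lee_fin.
Qed.
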